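(* Let $\langle\mathcal{D},\sigma,\varphi\rangle$ be a hybrid temporal achievement causal setting. Then $$\mathcal{D}\models\mathit{AchvSit}(s_\varphi,\varphi,\sigma)\land\sigma<s^*\land\big(\forall s',t.\;\sigma\le s'\le s^*\land\mathit{start}(s')\le t\le\mathit{end}(s',s^* )\supset\varphi[t,s']\big)\supset\mathit{AchvSit}(s_\varphi,\varphi,s^* )$$ (free variables $s_\varphi,s^*$ universally quantified).
   Context: Hybrid temporal situation calculus (HTSC): $S_0$ initial situation, $do(a,s)$ successor situation, $do([a_1,\dots,a_n],s)$ the nesting. $s\sqsubset s'$: $s'$ reachable from $s$ by one or more actions; $s\sqsubseteq s'$: $s\sqsubset s'\lor s=s'$. $\mathit{time}(a(\vec x,t))=t$, $\mathit{start}(do(a,s))=\mathit{time}(a)$. $\mathit{Exec}(s)\doteq\forall a,s'.(do(a,s')\sqsubseteq s\supset\mathit{Poss}(a,s')\land\mathit{start}(s')\le\mathit{time}(a))$; $s<s'$ abbreviates $s\sqsubset s'\land\mathit{Exec}(s')$; $s\le s'$ abbreviates $s<s'\lor s=s'$. A hybrid basic action theory $\mathcal{D}$ contains initial-state, precondition, successor-state (discrete fluents), state evolution (temporal fluents), unique-names and foundational axioms; each temporal fluent $f$ has a state evolution axiom $f(\vec x,t,s)=y\equiv[\bigvee_i(\gamma^f_i(\vec x,s)\land\delta_i(\vec x,y,t,s))\lor(y=f(\vec x,\mathit{start}(s),s)\land\neg\bigvee_i\gamma^f_i(\vec x,s))]$ with mutually exclusive contexts $\gamma^f_i$. An effect $\varphi$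 is a situation- and time-suppressed formula, uniform in the situation, constraining the value of a single primitive temporal fluent $f$; $\varphi[t,s]$ restores time $t$ and situation $s$. $\mathit{end}(s',s)=\mathit{start}(s')$ if $s'=s$; $=\mathit{time}(a)$ if $do(a,s')\le s$. $\mathit{AchvSitAux}(s_\varphi,\varphi,s)\doteq\varphi[\mathit{end}(s_\varphi,s),s_\varphi]\land\forall s',t.(s_\varphi<s'\le s\land\mathit{start}(s')\le t\le\mathit{end}(s',s)\supset\varphi[t,s'])$; $\mathit{AchvSit}(s_\varphi,\varphi,s)\doteq\mathit{AchvSitAux}(s_\varphi,\varphi,s)\land\neg\exists s''.(s''<s_\varphi\land\mathit{AchvSitAux}(s'',\varphi,s))$. Hybrid temporal achievement causal setting $\langle\mathcal{D},\sigma,\varphi\rangle$: $\sigma=do([\alpha_1,\dots,\alpha_n],S_0)$ ground, $n\ge1$, and $\mathcal{D}\models\mathit{Exec}(\sigma)\land\neg\varphi[\mathit{start}(S_0),S_0]\land\neg\varphi[\mathit{time}(\alpha_1),S_0]\land\varphi[\mathit{start}(\sigma),\sigma]$. *)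

From Stdlib Require Import Reals List.
Open Scope R_scope.
Set Implicit Arguments.

(* The part of a model of a hybrid basic action theory D that the statement
   talks about.  The situation sort is the standard model of the foundational
   axioms: situations are finite sequences of actions (most recent first),
   S0 = nil, do(a,s) = a :: s.  Actions form an abstract sort with a time
   function; Poss is arbitrary (precondition axioms); start0 = start(S0). *)
Record frame := Frame {
  act : Type;
  time : act -> R;
  Poss : act -> list act -> Prop;
  start0 : R }.

Definition sit (M : frame) := list (act M).
Definition S0 {M : frame} : sit M := nil.
Definition do_ {M : frame} (a : act M) (s : sit M) : sit M := a :: s.

Fixpoint do_seq {M : frame} (l : list (act M)) (s : sit M) : sit M :=
  match l with nil => s | a :: l' => do_seq l' (do_ a s) end.

Definition start {M : frame} (s : sit M) : R :=
  match s with nil => start0 M | a :: _ => time M a end.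

Definition sub {M : frame} (s s' : sit M) : Prop :=
  exists l, l <> nil /\ s' = l ++ s.
Definition subeq {M : frame} (s s' : sit M) : Prop := sub s s' \/ s = s'.

Definition Exec {M : frame} (s : sit M) : Prop :=
  forall a s', subeq (do_ a s') s -> Poss M a s' /\ start s' <= time M a.

Definition slt {M : frame} (s s' : sit M) : Prop := sub s s' /\ Exec s'.
Definition sle {M : frame} (s s' : sit M) : Prop := slt s s' \/ s = s'.

(* end(s',s) = t, as a (partial, functional) relation:
   start(s') if s' = s; time(a) if do(a,s') <= s. *)
Definition End_ {M : frame} (s' s : sit M) (t : R) : Prop :=
  (s' = s /\ t = start s') \/ (exists a, sle (do_ a s') s /\ t = time M a).

Definition AchvSitAux {M : frame} (phi : R -> sit M -> Prop) (sphi s : sit M) : Prop :=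
  (exists e, End_ sphi s e /\ phi e sphi) /\
  (forall s' t, slt sphi s' -> sle s' s ->
     forall e, End_ s' s e -> start s' <= t <= e -> phi t s').

Definition AchvSit {M : frame} (phi : R -> sit M -> Prop) (sphi s : sit M) : Prop :=
  AchvSitAux phi sphi s /\ ~ (exists s'', slt s'' sphi /\ AchvSitAux phi s'' s).

Definition state_evolution {M : frame} {V : Type} (f : R -> sit M -> V) : Prop :=
  exists (n : nat) (gamma : nat -> sit M -> Prop) (delta : nat -> V -> R -> sit M -> Prop),
    (forall i j s, (i < n)%nat -> (j < n)%nat -> gamma i s -> gamma j s -> i = j) /\
    (forall t s y, f t s = y <->
       ((exists i, (i < n)%nat /\ gamma i s /\ delta i y t s) \/
        (y = f (start s) s /\ ~ (exists i, (i < n)%nat /\ gamma i s)))).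

(* Hybrid temporal achievement causal setting <D, sigma, phi>, with
   sigma = do([a1 :: alphas], S0) (so n >= 1) and phi[t,s] = Phi(f(t,s)). *)
Definition causal_setting {M : frame} (phi : R -> sit M -> Prop)
    (a1 : act M) (alphas : list (act M)) : Prop :=
  let sigma := do_seq (a1 :: alphas) S0 in
  Exec sigma /\ ~ phi (start (@S0 M)) S0 /\ ~ phi (time M a1) S0 /\
  phi (start sigma) sigma.

(* For a situation s' strictly before sigma, end(s', .) is the time of the
   action that follows s' on the path to sigma; this action is the same on
   the path to any executable extension s* of sigma, so end(s', sigma) and
   end(s', s* ) coincide.  Hence the persistence conditions of AchvSitAux
   relative to sigma and relative to s* differ only on the situations between
   sigma and s*, which the extra hypothesis covers, and at the single point
   (start sigma, sigma), which the causal setting covers.  This transfers both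
   the achievement condition for s_phi and its minimality from sigma to s*. *)

From Stdlib Require Import Reals List Lia.
Open Scope R_scope.
Set Implicit Arguments.

Section SituationOrder.

Context {M : frame}.
Implicit Types x y z : sit M.

Lemma subeq_app x y : subeq x y <-> exists l, y = l ++ x.
Proof.
  split.
  - intros [[l [_ Hy]] | <-]; [now exists l | now exists nil].
  - intros [[| b l] Hy]; [now right | left].
    exists (b :: l); split; [discriminate | exact Hy].
Qed.

Lemma sub_length x y : sub x y -> (length x < length y)%nat.
Proof.
  intros [[| b l] [Hl ->]]; [congruence | simpl; rewrite length_app; lia].
Qed.

Lemma subeq_length x y : subeq x y -> (length x <= length y)%nat.
Proof. intros [l ->]%subeq_app; rewrite length_app; lia. Qed.

Lemma sub_subeq_asym x y : sub x y -> ~ subeq y x.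
Proof. intros Hxy Hyx; apply sub_length in Hxy; apply subeq_length in Hyx; lia. Qed.

Lemma subeq_refl x : subeq x x.
Proof. now right. Qed.

Lemma sub_subeq x y : sub x y -> subeq x y.
Proof. now left. Qed.

Lemma subeq_cons a x : subeq x (a :: x).
Proof. apply subeq_app; now exists (a :: nil). Qed.

Lemma subeq_trans x y z : subeq x y -> subeq y z -> subeq x z.
Proof.
  rewrite !subeq_app; intros [l1 ->] [l2 ->].
  exists (l2 ++ l1); now rewrite app_assoc.
Qed.

Lemma sub_subeq_trans x y z : sub x y -> subeq y z -> sub x z.
Proof.
  intros Hxy Hyz; destruct Hyz as [Hyz | <-]; [| exact Hxy].
  destruct Hxy as [l1 [Hl1 ->]], Hyz as [l2 [Hl2 ->]].
  exists (l2 ++ l1); split; [now destruct l2 | now rewrite app_assoc].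
Qed.

Lemma subeq_total x y z : subeq x z -> subeq y z -> subeq x y \/ sub y x.
Proof.
  rewrite !subeq_app; intros [l1 ->] [l2 Hz].
  apply app_eq_app in Hz as [l [[-> Hy] | [-> Hx]]].
  - left; now exists l.
  - destruct l as [| b l]; [left; exists nil; auto | right].
    exists (b :: l); split; [discriminate | exact Hx].
Qed.

Lemma sub_cons_subeq x y : sub x y -> exists a, subeq (a :: x) y.
Proof.
  intros [l [Hl ->]]; destruct (exists_last Hl) as [l' [a ->]].
  exists a; apply subeq_app; exists l'; now rewrite <- app_assoc.
Qed.

Lemma cons_subeq_of_sub a x y z :
  sub x y -> subeq y z -> subeq (a :: x) z -> subeq (a :: x) y.
Proof.
  intros Hxy Hyz Haz; destruct (subeq_total Haz Hyz) as [Hay | Hya]; [exact Hay |].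
  apply sub_length in Hxy; apply sub_length in Hya; simpl in Hya; lia.
Qed.

Lemma Exec_subeq x y : Exec y -> subeq x y -> Exec x.
Proof. intros Hy Hxy a s' Hs'; apply Hy; eapply subeq_trans; eauto. Qed.

Lemma sle_subeq x y : sle x y -> subeq x y.
Proof. intros [[Hxy _] | <-]; [now left | now right]. Qed.

Lemma slt_sle x y : slt x y -> sle x y.
Proof. now left. Qed.

Lemma sle_of_subeq x y : subeq x y -> Exec y -> sle x y.
Proof. intros [Hxy | <-] Hy; [left; now split | now right]. Qed.

Lemma sle_trans x y z : sle x y -> sle y z -> sle x z.
Proof.
  intros Hxy [[Hyz Hz] | <-]; [| exact Hxy].
  apply sle_of_subeq; [| exact Hz].
  eapply subeq_trans; [apply sle_subeq, Hxy | now left].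
Qed.

End SituationOrder.

Section EndOfSituation.

Context {M : frame}.
Implicit Types x y z : sit M.

Lemma End_subeq x y e : End_ x y e -> subeq x y.
Proof.
  intros [[-> _] | [a [Hay _]]]; [apply subeq_refl |].
  eapply subeq_trans; [apply subeq_cons | apply sle_subeq, Hay].
Qed.

Lemma End_self x e : End_ x x e -> e = start x.
Proof.
  intros [[_ He] | [a [Hax _]]]; [exact He | exfalso].
  apply sle_subeq, subeq_length in Hax; simpl in Hax; lia.
Qed.

Lemma End_sle x y : sle x y -> exists e, End_ x y e /\ start x <= e.
Proof.
  intros [[Hxy Hy] | <-]; [| exists (start x); split; [left | apply Rle_refl]; auto].
  destruct (sub_cons_subeq Hxy) as [a Hay].
  exists (time M a); split.
  - right; exists a; split; [now apply sle_of_subeq | reflexivity].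
  - exact (proj2 (Hy a x Hay)).
Qed.

Lemma End_extend x y z e : sub x y -> sle y z -> End_ x y e -> End_ x z e.
Proof.
  intros Hxy Hyz [[-> _] | [a [Hay ->]]].
  - exfalso; now apply (sub_subeq_asym Hxy), subeq_refl.
  - right; exists a; split; [eapply sle_trans; eauto | reflexivity].
Qed.

Lemma End_restrict x y z e :
  sub x y -> Exec y -> subeq y z -> End_ x z e -> End_ x y e.
Proof.
  intros Hxy Hy Hyz [[-> _] | [a [Haz ->]]].
  - exfalso; now apply (sub_subeq_asym (sub_subeq_trans Hxy Hyz)), subeq_refl.
  - right; exists a; split; [| reflexivity].
    apply sle_of_subeq; [| exact Hy].
    exact (cons_subeq_of_sub Hxy Hyz (sle_subeq Haz)).
Qed.

End EndOfSituation.

Section Extension.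

Context {M : frame}.
Variable phi : R -> sit M -> Prop.
Variables sigma sstar : sit M.
Hypothesis sigma_lt_sstar : slt sigma sstar.
Hypothesis phi_between : forall s' t, sle sigma s' -> sle s' sstar ->
  forall e, End_ s' sstar e -> start s' <= t <= e -> phi t s'.

Let Exec_sigma : Exec sigma.
Proof.
  destruct sigma_lt_sstar as [Hsub Hexec]; exact (Exec_subeq Hexec (sub_subeq Hsub)).
Qed.

Lemma AchvSitAux_extend sphi : AchvSitAux phi sphi sigma -> AchvSitAux phi sphi sstar.
Proof.
  destruct sigma_lt_sstar as [Hsub Hexec].
  intros [[e [Hend He]] Hpersist]; split.
  - destruct (End_subeq Hend) as [Hphi | <-].
    + exists e; split; [eapply End_extend; eauto using slt_sle | exact He].
    + destruct (End_sle (slt_sle sigma_lt_sstar)) as [e' [Hend' He']].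
      exists e'; split; [exact Hend' |].
      apply (phi_between (t := e') (or_intror eq_refl) (slt_sle sigma_lt_sstar) Hend').
      split; [exact He' | apply Rle_refl].
  - intros s' t Hphi_s' Hs'_sstar e' Hend' Ht.
    destruct (subeq_total (sle_subeq Hs'_sstar) (sub_subeq Hsub))
      as [[Hs'_sigma | <-] | Hsigma_s'].
    + apply (Hpersist s' t Hphi_s' (sle_of_subeq (sub_subeq Hs'_sigma) Exec_sigma) e');
        [exact (End_restrict Hs'_sigma Exec_sigma (sub_subeq Hsub) Hend') | exact Ht].
    + eapply phi_between; eauto; now right.
    + eapply phi_between; eauto.
      left; split; [exact Hsigma_s' | eapply Exec_subeq; eauto using sle_subeq].
Qed.

Hypothesis phi_start_sigma : phi (start sigma) sigma.

Lemma AchvSitAux_restrict s'' :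
  sub s'' sigma -> AchvSitAux phi s'' sstar -> AchvSitAux phi s'' sigma.
Proof.
  destruct sigma_lt_sstar as [Hsub Hexec].
  intros Hs''_sigma [[e [Hend He]] Hpersist]; split.
  - exists e; split; [eapply End_restrict; eauto using sub_subeq | exact He].
  - intros s' t Hs''_s' Hs'_sigma e' Hend' Ht.
    destruct (sle_subeq Hs'_sigma) as [Hs'_sub | <-].
    + apply (Hpersist s' t Hs''_s' (sle_trans Hs'_sigma (slt_sle sigma_lt_sstar)) e');
        [eapply End_extend; eauto using slt_sle | exact Ht].
    + apply End_self in Hend' as ->.
      replace t with (start s') by (apply Rle_antisym; apply Ht).
      exact phi_start_sigma.
Qed.

Lemma AchvSit_extend sphi : AchvSit phi sphi sigma -> AchvSit phi sphi sstar.
Proof.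
  intros [Hachv Hmin]; split; [now apply AchvSitAux_extend |].
  intros [s'' [Hs''_sphi Hachv'']]; apply Hmin; exists s''; split; [exact Hs''_sphi |].
  apply AchvSitAux_restrict; [| exact Hachv''].
  destruct Hachv as [[e [Hend _]] _].
  exact (sub_subeq_trans (proj1 Hs''_sphi) (End_subeq Hend)).
Qed.

End Extension.

Theorem lemma5p5 (M : frame) (V : Type) (f : R -> sit M -> V) (Phi : V -> Prop)
    (a1 : act M) (alphas : list (act M)) :
  state_evolution f ->
  causal_setting (fun t s => Phi (f t s)) a1 alphas ->
  forall sphi sstar : sit M,
    AchvSit (fun t s => Phi (f t s)) sphi (do_seq (a1 :: alphas) S0) ->
    slt (do_seq (a1 :: alphas) S0) sstar ->
    (forall s' t, sle (do_seq (a1 :: alphas) S0) s' -> sle s' sstar ->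
       forall e, End_ s' sstar e -> start s' <= t <= e -> Phi (f t s')) ->
    AchvSit (fun t s => Phi (f t s)) sphi sstar.
Proof.
  intros _ [_ [_ [_ Hphi_sigma]]] sphi sstar Hachv Hlt Hbetween.
  exact (AchvSit_extend Hlt Hbetween Hphi_sigma Hachv).
Qed.
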